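(* Let $n\ge1$ players all have the same additive valuation $v$ on a finite set of goods $M$. Goods of value $0$ are allowed. Then there exists an allocation that is both EFX and Pareto optimal.
   Context: A valuation is a function $v:2^M\to\mathbb{R}_{\ge0}$ with $v(\emptyset)=0$ that is monotone: $v(S)\le v(T)$ whenever $S\subseteq T$. It is additive if $v(S)=\sum_{g\in S}v(\{g\})$ for all $S\subseteq M$. An allocation is an ordered partition $(A_1,\dots,A_n)$ of $M$; parts may be empty. It is EFX if for all players $i,j$ and every $g\in A_j$ we have $v_i(A_i)\ge v_i(A_j\setminus\{g\})$. It is Pareto optimal (PO) if there is no allocation $B$ with $v_i(B_i)\ge v_i(A_i)$ for all $i$ and $v_j(B_j)>v_j(A_j)$ for some $j$. *)

From HB Require Import structures.
From mathcomp Require Import all_boot all_order all_algebra.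
Set Implicit Arguments. Unset Strict Implicit. Unset Printing Implicit Defensive.
Import Order.TTheory GRing.Theory Num.Theory.
Local Open Scope ring_scope.

Definition valuation (R : realFieldType) (M : finType) (v : {set M} -> R) : Prop :=
  [/\ v set0 = 0, (forall S : {set M}, 0 <= v S) & (forall S T : {set M}, S \subset T -> v S <= v T)].

Definition additive_val (R : realFieldType) (M : finType) (v : {set M} -> R) : Prop :=
  forall S : {set M}, v S = \sum_(g in S) v [set g].

(* An allocation (ordered partition of M into n parts) is a map assigning
   each good to a player; bundle of player i: *)
Definition bundle (n : nat) (M : finType) (A : {ffun M -> 'I_n}) (i : 'I_n) : {set M} :=
  [set g | A g == i].

Definition EFX (R : realFieldType) (n : nat) (M : finType)
    (vs : 'I_n -> {set M} -> R) (A : {ffun M -> 'I_n}) : Prop :=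
  forall i j : 'I_n, forall g, g \in bundle A j ->
    vs i (bundle A j :\ g) <= vs i (bundle A i).

Definition pareto_optimal (R : realFieldType) (n : nat) (M : finType)
    (vs : 'I_n -> {set M} -> R) (A : {ffun M -> 'I_n}) : Prop :=
  ~ exists B : {ffun M -> 'I_n},
      (forall i, vs i (bundle A i) <= vs i (bundle B i)) /\
      (exists j, vs j (bundle A j) < vs j (bundle B j)).

From HB Require Import structures.
From mathcomp Require Import all_boot all_order all_algebra.
From mathcomp Require Import ring.
Set Implicit Arguments. Unset Strict Implicit. Unset Printing Implicit Defensive.
Import Order.TTheory GRing.Theory Num.Theory.
Local Open Scope ring_scope.

(* With identical additive valuations every allocation has total value v(M),
   so every allocation is Pareto optimal and only EFX needs work.  Take an
   allocation minimising the sum of squared bundle values: moving a good of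
   value x > 0 from j to i changes that sum by 2x(v(A_i) - v(A_j \ g)), so
   minimality gives EFX for every positive good.  Null goods do not change
   bundle values; giving all of them to a poorest player keeps the minimiser
   and makes EFX trivial for them as well. *)

Section IdenticalAdditive.
Variables (R : realFieldType) (M : finType) (n : nat) (v : {set M} -> R).
Hypothesis hadd : additive_val v.

Lemma additive_setD1 (S : {set M}) g : g \in S -> v S = v [set g] + v (S :\ g).
Proof. by move=> gS; rewrite !hadd (big_setD1 g gS) big_set1. Qed.

Lemma sum_bundle_val (A : {ffun M -> 'I_n}) : \sum_k v (bundle A k) = v setT.
Proof.
rewrite hadd (partition_big A predT) //=; apply: eq_bigr => k _.
by rewrite hadd; apply: eq_bigl => g; rewrite !inE.
Qed.

Lemma identical_additive_pareto_optimal (A : {ffun M -> 'I_n}) :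
  pareto_optimal (fun _ => v) A.
Proof.
case=> B [AleB [j ltj]].
have : \sum_k v (bundle A k) < \sum_k v (bundle B k).
  rewrite (bigD1 j) //= [X in _ < X](bigD1 j) //=.
  by apply: ltr_leD => //; apply: ler_sum => k _; apply: AleB.
by rewrite !sum_bundle_val ltxx.
Qed.

Definition move_good (A : {ffun M -> 'I_n}) g i : {ffun M -> 'I_n} :=
  [ffun x => if x == g then i else A x].

Lemma bundle_move_good_to (A : {ffun M -> 'I_n}) g i :
  bundle (move_good A g i) i = g |: bundle A i.
Proof.
by apply/setP => x; rewrite !inE ffunE; case: (x =P g) => [->|]; rewrite ?eqxx.
Qed.

Lemma bundle_move_good_from (A : {ffun M -> 'I_n}) g i : A g != i ->
  bundle (move_good A g i) (A g) = bundle A (A g) :\ g.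
Proof.
move=> gi; apply/setP => x; rewrite !inE ffunE.
by case: (x =P g) => [->|//]; rewrite eq_sym (negbTE gi).
Qed.

Lemma bundle_move_good_other (A : {ffun M -> 'I_n}) g i k :
  k != i -> k != A g ->
  bundle (move_good A g i) k = bundle A k.
Proof.
move=> ki kg; apply/setP => x; rewrite !inE ffunE.
by case: (x =P g) => [->|//]; rewrite eq_sym (negbTE ki) eq_sym (negbTE kg).
Qed.

Definition sqsum (A : {ffun M -> 'I_n}) := \sum_k v (bundle A k) ^+ 2.

Lemma sqsum_move_good (A : {ffun M -> 'I_n}) g i : A g != i ->
  sqsum (move_good A g i) =
    sqsum A + 2 * v [set g] * (v (bundle A i) - v (bundle A (A g) :\ g)).
Proof.
move=> gi; set B := move_good A g i.
have split_ij (C : {ffun M -> 'I_n}) : sqsum C = v (bundle C i) ^+ 2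
    + v (bundle C (A g)) ^+ 2 + \sum_(k | (k != i) && (k != A g)) v (bundle C k) ^+ 2.
  by rewrite /sqsum (bigD1 i) //= (bigD1 (A g)) ?addrA.
have others : \sum_(k | (k != i) && (k != A g)) v (bundle B k) ^+ 2
    = \sum_(k | (k != i) && (k != A g)) v (bundle A k) ^+ 2.
  by apply: eq_bigr => k /andP[ki kg]; rewrite bundle_move_good_other.
have gAi : g \notin bundle A i by rewrite !inE.
have vBi : v (bundle B i) = v [set g] + v (bundle A i).
  by rewrite bundle_move_good_to (additive_setD1 (setU11 g _)) setU1K.
have vBj : v (bundle B (A g)) = v (bundle A (A g) :\ g).
  by rewrite bundle_move_good_from.
have vAj : v (bundle A (A g)) = v [set g] + v (bundle A (A g) :\ g).
  by apply: additive_setD1; rewrite inE.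
rewrite !split_ij others vBi vBj vAj; ring.
Qed.

Lemma sqsum_min_efx (A : {ffun M -> 'I_n}) i g :
  (forall B, sqsum A <= sqsum B) -> 0 < v [set g] ->
  v (bundle A (A g) :\ g) <= v (bundle A i).
Proof.
move=> Amin gpos; have [<-|gi] := eqVneq (A g) i.
  by rewrite [X in _ <= X](@additive_setD1 _ g) ?inE // lerDr ltW.
have := Amin (move_good A g i); rewrite sqsum_move_good // lerDl.
by rewrite pmulr_rge0 ?subr_ge0 // mulr_gt0.
Qed.

Definition give_null_goods (A : {ffun M -> 'I_n}) k : {ffun M -> 'I_n} :=
  [ffun g => if v [set g] == 0 then k else A g].

Lemma bundle_give_null_goods (A : {ffun M -> 'I_n}) k i :
  v (bundle (give_null_goods A k) i) = v (bundle A i).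
Proof.
rewrite [LHS]hadd [RHS]hadd [LHS]big_mkcond [RHS]big_mkcond.
apply: eq_bigr => g _; rewrite !inE ffunE.
by have [->|_] := eqVneq (v [set g]) 0; rewrite ?eqxx ?if_same.
Qed.

Lemma sqsum_give_null_goods (A : {ffun M -> 'I_n}) k :
  sqsum (give_null_goods A k) = sqsum A.
Proof. by apply: eq_bigr => i _; rewrite bundle_give_null_goods. Qed.

Lemma give_null_goods_efx (A : {ffun M -> 'I_n}) k :
  (forall g, 0 <= v [set g]) -> (forall B, sqsum A <= sqsum B) ->
  (forall i, v (bundle A k) <= v (bundle A i)) ->
  EFX (fun _ => v) (give_null_goods A k).
Proof.
move=> vge0 Amin kpoor i j g; rewrite inE => /eqP A'g.
have [g0|gpos] := eqVneq (v [set g]) 0; last first.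
  rewrite -A'g; apply: sqsum_min_efx => [B|].
    by rewrite sqsum_give_null_goods.
  by rewrite lt0r gpos vge0.
have gA'j : g \in bundle (give_null_goods A k) j by rewrite inE A'g.
have := additive_setD1 gA'j; rewrite g0 add0r => <-.
move: A'g; rewrite ffunE g0 eqxx => <-.
by rewrite !bundle_give_null_goods.
Qed.

End IdenticalAdditive.

Theorem theorem5p3 (R : realFieldType) (M : finType) (n : nat) (hn : (0 < n)%N)
    (v : {set M} -> R) (hv : valuation v) (hadd : additive_val v) :
  exists A : {ffun M -> 'I_n},
    EFX (fun _ : 'I_n => v) A /\ pareto_optimal (fun _ : 'I_n => v) A.
Proof.
case: hv => _ vge0 _; pose i0 := Ordinal hn.
have [A _ Amin] := arg_minP (sqsum v) (P := predT) (i0 := [ffun _ => i0]) isT.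
have [k _ kpoor] := arg_minP (fun k => v (bundle A k)) (P := predT) (i0 := i0) isT.
exists (give_null_goods v A k); split.
  by apply: give_null_goods_efx => // [B|i]; [apply: Amin | apply: kpoor].
exact: identical_additive_pareto_optimal.
Qed.
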